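(* Let $\{\mathcal H,\gamma,\ell,\ell^{(2)}\}$ be null metric hypersurface data $(\Phi,\xi)$-embedded in a semi-Riemannian manifold $(\mathcal M,g)$ and let $Z\in\mathfrak X(\mathcal M)$. Then on $\Phi(\mathcal H)$, $$Z^\alpha=\xi^\alpha n^aZ_a+P^{ab}e_a^\alpha Z_b+\nu^\alpha\,\boldsymbol Z(\xi),$$ where $\boldsymbol Z=g(Z,\cdot)$ and $Z_a$ denotes the components of $\Phi^\star\boldsymbol Z$.
   Context: Metric hypersurface data: $\mathcal H$ smooth $\mathfrak n$-manifold with symmetric $(0,2)$-tensor $\gamma$, one-form $\ell$, function $\ell^{(2)}$ such that $\mathcal A((W,a),(V,b))=\gamma(W,V)+a\ell(V)+b\ell(W)+ab\ell^{(2)}$ is non-degenerate on each $T_p\mathcal H\times\mathbb R$. $P$ (symmetric $(2,0)$), $n$, $n^{(2)}$ defined by $\gamma_{ab}n^b+n^{(2)}\ell_a=0$, $\ell_an^a+n^{(2)}\ell^{(2)}=1$, $P^{ab}\ell_b+\ell^{(2)}n^a=0$, $P^{ac}\gamma_{cb}+\ell_bn^a=\delta^a_b$; null means $n^{(2)}=0$. $(\Phi,\xi)$-embedded: $\Phi:\mathcal H\to\mathcal M$ embedding, $\xi$ vector field along $\Phi(\mathcal H)$ transverse to it, $\Phi^\star g=\gamma$, $\Phi^\star(g(\xi,\cdot))=\ell$, $\Phi^\star(g(\xi,\xi))=\ell^{(2)}$. $e_a^\alpha$ are the components of $\Phi_\star e_a$ for a basis $e_a$ of $T\mathcal H$, and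 $\nu=n^{(2)}\xi+\Phi_\star n$ ($=\Phi_\star n$ here). *)

(* Pointwise (linear-algebra) model of null metric hypersurface
   data (Phi,xi)-embedded in a semi-Riemannian manifold, at a point p of H:
   ambient tangent space T_{Phi(p)}M = R^(m+1) (row vectors of components),
   g = matrix of the metric g_{alpha beta} (symmetric, nondegenerate),
   E = m x (m+1) matrix whose a-th row is e_a^alpha = components of Phi_* e_a,
   xi = components xi^alpha of the rigging. *)
From HB Require Import structures.
From mathcomp Require Import all_boot all_order all_algebra.
Set Implicit Arguments. Unset Strict Implicit. Unset Printing Implicit Defensive.
Import Order.TTheory GRing.Theory Num.Theory.
Local Open Scope ring_scope.

Section HD.
Variables (R : realFieldType) (m : nat).
Variables (g : 'M[R]_(m.+1)) (E : 'M[R]_(m, m.+1)) (xi : 'rV[R]_(m.+1)).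

Definition hd_gamma : 'M[R]_m := E *m g *m E^T.
Definition hd_ell : 'rV[R]_m := xi *m g *m E^T.
Definition hd_ell2 : R := (xi *m g *m xi^T) 0 0.

Definition hd_A : 'M[R]_(m + 1) :=
  block_mx hd_gamma hd_ell^T hd_ell hd_ell2%:M.
End HD.

(* (Phi,xi)-embedded metric hypersurface data at a point: g is a
   semi-Riemannian metric (symmetric, nondegenerate, any signature),
   Phi is an immersion (the e_a are independent), xi is transverse
   (e_a together with xi form a basis), and A is nondegenerate. *)
Definition embedded_hd (R : realFieldType) (m : nat)
  (g : 'M[R]_(m.+1)) (E : 'M[R]_(m, m.+1)) (xi : 'rV[R]_(m.+1)) : Prop :=
  [/\ g^T = g, g \in unitmx, row_free E, row_free (col_mx E xi)
    & hd_A g E xi \in unitmx].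

Definition hd_dual (R : realFieldType) (m : nat)
  (g : 'M[R]_(m.+1)) (E : 'M[R]_(m, m.+1)) (xi : 'rV[R]_(m.+1))
  (P : 'M[R]_m) (nv : 'rV[R]_m) (n2 : R) : Prop :=
  [/\ P^T = P,
      hd_gamma g E *m nv^T + n2 *: (hd_ell g E xi)^T = 0,
      (hd_ell g E xi *m nv^T) 0 0 + n2 * hd_ell2 g xi = 1,
      P *m (hd_ell g E xi)^T + hd_ell2 g xi *: nv^T = 0
    & P *m hd_gamma g E + nv^T *m hd_ell g E xi = 1%:M].

(** The identity is [Z = Z g g^{-1}] once the inverse metric is written in the
    frame [(e_a, xi)] of the ambient tangent space:
    [g^{-1} = e_a (P^{ab} e_b + n^a xi) + xi nu].  Multiplying the candidate
    [Q] on the left by [E g] and by [xi g] reduces [E g Q = E] and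
    [xi g Q = xi] to the four defining relations of [(P, n, n2)]; since the
    rows of [E] and [xi] span the ambient space, this forces [g Q = 1]. *)
From HB Require Import structures.
From mathcomp Require Import all_boot all_order all_algebra.
Set Implicit Arguments. Unset Strict Implicit. Unset Printing Implicit Defensive.
Import Order.TTheory GRing.Theory Num.Theory.
Local Open Scope ring_scope.

Lemma row_free_full_sq (F : fieldType) p n (A : 'M[F]_(p, n)) :
  p = n -> row_free A = row_full A.
Proof. by move=> eq_pn; subst p. Qed.

Lemma row_full_mulmx_id (F : fieldType) p n (A : 'M[F]_(p, n)) (B : 'M_n) :
  row_full A -> A *m B = A -> B = 1%:M.
Proof. by move=> fullA; rewrite -{2}[A]mulmx1 => /(row_full_inj fullA). Qed.

Section RiggedInverseMetric.
Variables (R : realFieldType) (m : nat).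
Variables (g : 'M[R]_(m.+1)) (E : 'M[R]_(m, m.+1)) (xi : 'rV[R]_(m.+1)).
Variables (P : 'M[R]_m) (nv : 'rV[R]_m) (n2 : R).
Hypothesis gT : g^T = g.

Definition hd_nu : 'rV[R]_(m.+1) := n2 *: xi + nv *m E.

Definition hd_inv_metric : 'M[R]_(m.+1) :=
  E^T *m (P *m E + nv^T *m xi) + xi^T *m hd_nu.

Lemma hd_gammaT : (hd_gamma g E)^T = hd_gamma g E.
Proof. by rewrite /hd_gamma !trmx_mul trmxK gT mulmxA. Qed.

Lemma mulmx_frame_g_rigging : E *m g *m xi^T = (hd_ell g E xi)^T.
Proof. by rewrite /hd_ell !trmx_mul trmxK gT mulmxA. Qed.

Hypothesis dual : hd_dual g E xi P nv n2.

Lemma hd_dual_gammaP : hd_gamma g E *m P + (hd_ell g E xi)^T *m nv = 1%:M.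
Proof.
case: dual => PT _ _ _ dual_gamma.
by rewrite -hd_gammaT -PT -[nv]trmxK -!trmx_mul -raddfD /= dual_gamma trmx1.
Qed.

Lemma hd_dual_ellP : hd_ell g E xi *m P + hd_ell2 g xi *: nv = 0.
Proof.
case: dual => PT _ _ dual_P _.
rewrite -PT -[hd_ell _ _ _]trmxK -[nv]trmxK -trmx_mul -linearZ -raddfD /=.
by rewrite dual_P trmx0.
Qed.

Lemma hd_dual_elln : hd_ell g E xi *m nv^T + (n2 * hd_ell2 g xi)%:M = 1%:M.
Proof.
case: dual => _ _ dual_ell2 _ _.
by rewrite [_ *m _]mx11_scalar -raddfD /= dual_ell2.
Qed.

Lemma frame_mul_g_inv_metric : E *m (g *m hd_inv_metric) = E.
Proof.
case: dual => _ dual_n _ _ _.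
rewrite mulmxA /hd_inv_metric /hd_nu mulmxDr !mulmxA -/(hd_gamma g E).
rewrite mulmx_frame_g_rigging !mulmxDr !mulmxA [X in _ + X]addrC addrACA.
rewrite -!mulmxDl hd_dual_gammaP mul1mx -scalemxAr scalemxAl -mulmxDl.
by rewrite dual_n mul0mx addr0.
Qed.

Lemma rigging_mul_g_inv_metric : xi *m (g *m hd_inv_metric) = xi.
Proof.
rewrite mulmxA /hd_inv_metric /hd_nu mulmxDr !mulmxA -/(hd_ell g E xi).
rewrite [xi *m g *m xi^T]mx11_scalar -/(hd_ell2 g xi) mul_scalar_mx.
rewrite scalerDr scalerA scalemxAl mulmxDr !mulmxA [_ *: xi + _]addrC addrACA.
rewrite -mulmxDl hd_dual_ellP mul0mx add0r mulrC -mul_scalar_mx -mulmxDl.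
by rewrite hd_dual_elln mul1mx.
Qed.

Lemma mulmx_g_inv_metric :
  row_free (col_mx E xi) -> g *m hd_inv_metric = 1%:M.
Proof.
move=> free_frame.
have full_frame : row_full (col_mx E xi) by rewrite -row_free_full_sq ?addn1.
apply: (row_full_mulmx_id full_frame).
by rewrite mul_col_mx frame_mul_g_inv_metric rigging_mul_g_inv_metric.
Qed.

Lemma vector_frame_decomposition (Z : 'rV[R]_(m.+1)) :
  row_free (col_mx E xi) ->
  Z = ((Z *m g *m E^T) *m nv^T) 0 0 *: xi + (Z *m g *m E^T *m P) *m E
      + ((Z *m g *m xi^T) 0 0) *: hd_nu.
Proof.
move=> free_frame; rewrite -!mul_scalar_mx -!mx11_scalar.
rewrite -{1}[Z]mulmx1 -(mulmx_g_inv_metric free_frame) /hd_inv_metric.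
rewrite mulmxA mulmxDr !mulmxA mulmxDr !mulmxA.
by rewrite [_ *m nv^T *m xi + _]addrC.
Qed.

End RiggedInverseMetric.

Theorem lemmaB1 (R : realFieldType) (m : nat)
  (g : 'M[R]_(m.+1)) (E : 'M[R]_(m, m.+1)) (xi : 'rV[R]_(m.+1))
  (P : 'M[R]_m) (nv : 'rV[R]_m) (n2 : R) (Z : 'rV[R]_(m.+1)) :
  embedded_hd g E xi ->
  hd_dual g E xi P nv n2 ->
  n2 = 0 ->
  let Zflat := Z *m g in
  let Za := Zflat *m E^T in
  let Zxi := (Zflat *m xi^T) 0 0 in
  let nu := n2 *: xi + nv *m E in
  Z = (Za *m nv^T) 0 0 *: xi + (Za *m P) *m E + Zxi *: nu.
Proof.
move=> [gT _ _ free_frame _] dual _ /=.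
exact: vector_frame_decomposition.
Qed.
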